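(* Let $(X,|\cdot|)$ be a Banach space which is uniformly convex of type $p\geqslant 2$, i.e. there is $c>0$ with $\delta_X(\varepsilon)\geqslant c\,\varepsilon^p$ for all $\varepsilon\in(0,2]$. Let $Y$ be the tree with four vertices $a_0,a_1,a_2,a_2'$ and edges $a_0a_1$, $a_1a_2$, $a_1a_2'$, equipped with its graph (shortest-path) metric $d$. Then there is a constant $K=K(X)>0$ such that for every $D>0$ and every map $\varphi:Y\to X$ that is $D$-Lipschitz (i.e. $|\varphi(x)-\varphi(y)|\leqslant D\,d(x,y)$ for all $x,y\in Y$) and distance non-decreasing (i.e. $|\varphi(x)-\varphi(y)|\geqslant d(x,y)$ for all $x,y\in Y$), either \[|\varphi(a_0)-\varphi(a_2)|\leqslant 2\Big(D-\frac{K}{D^{p-1}}\Big)\] or \[|\varphi(a_0)-\varphi(a_2')|\leqslant 2\Big(D-\frac{K}{D^{p-1}}\Big).\]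
   Context: The modulus of (uniform) convexity of a Banach space $X$ with norm $|\cdot|$ is, for $\varepsilon\in(0,2]$, \[\delta_X(\varepsilon)=\inf\left\{1-\left|\tfrac{x+y}{2}\right| \;:\; |x|=|y|=1,\ |x-y|\geqslant\varepsilon\right\}.\] $X$ is called uniformly convex of type $p\geqslant 2$ if $\delta_X(\varepsilon)\geqslant c\,\varepsilon^p$ for some constant $c>0$ and all $\varepsilon\in(0,2]$. In the tree $Y$, $a_0$ is the root, $a_1$ its unique child, and $a_2,a_2'$ the two children of $a_1$. *)

From HB Require Import structures.
From mathcomp Require Import all_boot all_order all_algebra.
From mathcomp Require Import all_classical all_reals all_analysis.
Set Implicit Arguments. Unset Strict Implicit. Unset Printing Implicit Defensive.
Import Order.TTheory GRing.Theory Num.Theory.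
Import numFieldNormedType.Exports.
Local Open Scope classical_set_scope.
Local Open Scope ring_scope.

Definition modulus_convexity (R : realType) (X : normedModType R) (eps : R) : R :=
  inf [set t : R | exists x y : X,
         [/\ `|x| = 1, `|y| = 1, eps <= `|x - y| & t = 1 - `|(2%:R)^-1 *: (x + y)|] ].

Definition unif_convex_type (R : realType) (X : normedModType R) (p : R) : Prop :=
  exists c : R, 0 < c /\
    forall eps : R, 0 < eps -> eps <= 2%:R ->
      c * eps `^ p <= modulus_convexity X eps.

Inductive Yv := a0 | a1 | a2 | a2'.

Definition tdist (R : realType) (u v : Yv) : R :=
  match u, v with
  | a0, a0 | a1, a1 | a2, a2 | a2', a2' => 0
  | a0, a1 | a1, a0 | a1, a2 | a2, a1 | a1, a2' | a2', a1 => 1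
  | _, _ => 2%:R
  end.

From HB Require Import structures.
From mathcomp Require Import all_boot all_order all_algebra.
From mathcomp Require Import all_classical all_reals all_analysis.
From mathcomp Require Import ring lra.
Import Order.TTheory GRing.Theory Num.Theory.
Import numFieldNormedType.Exports.
Local Open Scope ring_scope.
Set Implicit Arguments. Unset Strict Implicit.

(* Let u, v, w be the images of the edges a0a1, a1a2, a1a2'; their lengths lie in
   [1, D].  If both |u + v| and |u + w| exceeded 2 (D - t) with t = K / D^(p-1), then
   |v|, |w| > D - 2t and the midpoints of the normalised pairs (u^, v^) and (u^, w^)
   would both have norm above 1 - 2t/D.  Since |v - w| >= 2 and t <= 1/4, one of v^, w^
   is at distance at least 1/(2D) from u^, so uniform convexity of type p gives that
   pair a midpoint defect of at least c (2D)^-p >= 2t/D as soon as K <= c / 2^(p+1). *)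

Section Normalization.
Variables (R : realType) (X : normedModType R).

Definition normalize (v : X) : X := `|v|^-1 *: v.

Lemma norm_normalize (v : X) : v != 0 -> `|normalize v| = 1.
Proof.
move=> v0; rewrite normrZ ger0_norm ?invr_ge0 // mulVf //.
by rewrite normr_eq0.
Qed.

Lemma dist_scale_normalize (D : R) (v : X) :
  0 < `|v| -> `|v| <= D -> `|D *: normalize v - v| = D - `|v|.
Proof.
move=> v0 vD; have v0' : `|v| != 0 by rewrite gt_eqF.
rewrite /normalize scalerA -[X in _ - X]scale1r -scalerBl normrZ ger0_norm.
  by rewrite mulrBl -mulrA mulVf // mulr1 mul1r.
by rewrite subr_ge0 ler_pdivlMr // mul1r.
Qed.

Lemma normalize_midpoint_defect (D : R) (u v : X) :
  0 < `|u| -> `|u| <= D -> 0 < `|v| -> `|v| <= D ->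
  D * (1 - `|(2%:R)^-1 *: (normalize u + normalize v)|) <= 2%:R * D - `|u + v|.
Proof.
move=> u0 uD v0 vD.
have D0 : 0 <= D by apply: le_trans (ltW u0) uD.
have split_uv : u + v
    = D *: (normalize u + normalize v) - ((D *: normalize u - u) + (D *: normalize v - v)).
  by rewrite scalerDr opprD !opprB addrACA !subrKC.
have tri : `|u + v| <= D * `|normalize u + normalize v| + ((D - `|u|) + (D - `|v|)).
  rewrite -(dist_scale_normalize u0 uD) -(dist_scale_normalize v0 vD).
  have -> : D * `|normalize u + normalize v| = `|D *: (normalize u + normalize v)|.
    by rewrite normrZ ger0_norm.
  by rewrite split_uv; apply: le_trans (ler_normB _ _) _; rewrite lerD2l ler_normD.
have := ler_normD u v.
rewrite normrZ ger0_norm ?invr_ge0 ?ler0n //; lra.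
Qed.

Lemma normalize_separation (D : R) (v w : X) :
  0 < `|v| -> `|v| <= D -> 0 < `|w| -> `|w| <= D ->
  `|v - w| <= D * `|normalize v - normalize w| + ((D - `|v|) + (D - `|w|)).
Proof.
move=> v0 vD w0 wD.
have D0 : 0 <= D by apply: le_trans (ltW v0) vD.
have split_vw : v - w
    = D *: (normalize v - normalize w) - (D *: normalize v - v) + (D *: normalize w - w).
  by rewrite scalerBr opprB (addrC (_ - _)) !subrKA.
rewrite -(dist_scale_normalize v0 vD) -(dist_scale_normalize w0 wD) addrA.
have -> : D * `|normalize v - normalize w| = `|D *: (normalize v - normalize w)|.
  by rewrite normrZ ger0_norm.
rewrite split_vw; apply: le_trans (ler_normD _ _) _; rewrite lerD2r.
exact: ler_normB.
Qed.

End Normalization.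

Section UniformConvexity.
Variables (R : realType) (X : normedModType R).

Lemma modulus_convexity_le (eps : R) (x y : X) :
  `|x| = 1 -> `|y| = 1 -> eps <= `|x - y| ->
  modulus_convexity X eps <= 1 - `|(2%:R)^-1 *: (x + y)|.
Proof.
move=> x1 y1 xy; apply: ge_inf; last by exists x, y.
exists 0 => _ [x' [y' [x'1 y'1 _ ->]]].
rewrite subr_ge0 normrZ ger0_norm ?invr_ge0 ?ler0n // ler_pdivrMl ?ltr0n // mulr1.
by apply: le_trans (ler_normD _ _) _; rewrite x'1 y'1.
Qed.

Variables (p c : R).
Hypothesis p_ge0 : 0 <= p.
Hypothesis c_ge0 : 0 <= c.
Hypothesis convex_type :
  forall eps : R, 0 < eps -> eps <= 2%:R -> c * eps `^ p <= modulus_convexity X eps.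

Lemma unif_convex_separated (D : R) (x y : X) :
  `|x| = 1 -> `|y| = 1 -> 1 <= 2%:R * D * `|x - y| ->
  c <= (2%:R * D) `^ p * (1 - `|(2%:R)^-1 *: (x + y)|).
Proof.
move=> x1 y1 sep.
have xy0 : 0 < `|x - y|.
  by rewrite lt_def normr_ge0 andbT; apply: contraTneq sep => ->; rewrite mulr0 ler10.
have D0 : 0 <= 2%:R * D.
  by rewrite -(pmulr_lge0 _ xy0); apply: le_trans sep.
have xy2 : `|x - y| <= 2%:R by apply: le_trans (ler_normB _ _) _; rewrite x1 y1.
apply: le_trans (ler_wpM2l (powR_ge0 _ _) (le_trans (convex_type xy0 xy2)
  (modulus_convexity_le x1 y1 (lexx _)))).
rewrite mulrCA -powRM ?normr_ge0 //.
rewrite -{1}[c]mulr1 ler_wpM2l // (le_trans _ (ge0_ler_powR p_ge0 _ _ sep)) ?powR1 ?nnegrE //.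
exact: le_trans ler01 sep.
Qed.

End UniformConvexity.

Section Tripod.
Variables (R : realType) (X : normedModType R) (p c K : R).
Hypothesis p_ge1 : 1 <= p.
Hypothesis c_ge0 : 0 <= c.
Hypothesis convex_type :
  forall eps : R, 0 < eps -> eps <= 2%:R -> c * eps `^ p <= modulus_convexity X eps.
Hypothesis K_ge0 : 0 <= K.
Hypothesis K_le : K <= 4%:R^-1.
Hypothesis K_small : K * (2%:R * 2%:R `^ p) <= c.

Lemma separated_midpoint_defect (D : R) (x y : X) :
  0 < D -> `|x| = 1 -> `|y| = 1 -> 1 <= 2%:R * D * `|x - y| ->
  2%:R * (K / D `^ (p - 1)) <= D * (1 - `|(2%:R)^-1 *: (x + y)|).
Proof.
move=> D0 x1 y1 far.
have P0 : 0 < D `^ (p - 1) := powR_gt0 _ D0.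
have DpE : (2%:R * D) `^ p = 2%:R `^ p * D `^ (p - 1) * D.
  rewrite powRM ?ler0n ?ltW // -(mulr_powRB1 (ltW D0) (lt_le_trans ltr01 p_ge1)).
  by rewrite mulrA mulrAC.
have := unif_convex_separated (le_trans ler01 p_ge1) c_ge0 convex_type x1 y1 far.
rewrite DpE -mulrA => /(le_trans K_small).
have -> : K * (2%:R * 2%:R `^ p) = 2%:R `^ p * D `^ (p - 1) * (2%:R * (K / D `^ (p - 1))).
  by field; rewrite gt_eqF.
by rewrite ler_pM2l // mulr_gt0 // powR_gt0.
Qed.

Lemma tripod_short_branch (D : R) (u v w : X) :
  1 <= `|u| <= D -> 1 <= `|v| <= D -> 1 <= `|w| <= D -> 2%:R <= `|v - w| ->
  `|u + v| <= 2%:R * (D - K / D `^ (p - 1)) \/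
  `|u + w| <= 2%:R * (D - K / D `^ (p - 1)).
Proof.
move=> /andP[u1 uD] /andP[v1 vD] /andP[w1 wD] vw2.
have D1 : 1 <= D := le_trans u1 uD.
have D0 : 0 < D := lt_le_trans ltr01 D1.
have norm_gt0 (z : X) : 1 <= `|z| -> 0 < `|z| by apply: lt_le_trans.
have nz (z : X) : 1 <= `|z| -> z != 0 by move/norm_gt0; rewrite normr_gt0.
set t := K / D `^ (p - 1).
have t4 : t <= 4%:R^-1.
  apply: le_trans K_le; rewrite ler_pdivrMr ?powR_gt0 // ler_peMr //.
  by rewrite -{1}(powRr0 D); apply: ler_powR; rewrite // subr_ge0.
pose defect (y : X) := 1 - `|(2%:R)^-1 *: (normalize u + y)|.
have long_branch (z : X) : 1 <= `|z| -> `|z| <= D -> 2%:R * (D - t) < `|u + z| ->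
    D - `|z| < 2%:R * t /\ D * defect (normalize z) < 2%:R * t.
  move=> z1 zD uz; have := ler_normD u z; split; first by lra.
  apply: le_lt_trans (normalize_midpoint_defect (norm_gt0 _ u1) uD (norm_gt0 _ z1) zD) _.
  lra.
have [|uv_long] := lerP `|u + v| (2%:R * (D - t)); first by left.
have [|uw_long] := lerP `|u + w| (2%:R * (D - t)); first by right.
have [v_near v_close] := long_branch v v1 vD uv_long.
have [w_near w_close] := long_branch w w1 wD uw_long.
have := normalize_separation (norm_gt0 _ v1) vD (norm_gt0 _ w1) wD.
set a := `|normalize u - normalize v|; set b := `|normalize u - normalize w|.
have vw_ab : `|normalize v - normalize w| <= a + b.
  by rewrite /a (distrC (normalize u)) ler_distD.
move=> /(le_trans vw2) vw_sep.
have far : 1 < D * a + D * b.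
  rewrite -mulrDr; apply: lt_le_trans (ler_wpM2l (ltW D0) vw_ab); lra.
have [a_far|a_near] := lerP 1 (2%:R * D * a).
  have := separated_midpoint_defect D0 (norm_normalize (nz _ u1)) (norm_normalize (nz _ v1)) a_far.
  by rewrite -/t -/(defect _); lra.
have b_far : 1 <= 2%:R * D * b by move: a_near; rewrite -!mulrA; lra.
have := separated_midpoint_defect D0 (norm_normalize (nz _ u1)) (norm_normalize (nz _ w1)) b_far.
by rewrite -/t -/(defect _); lra.
Qed.

End Tripod.

Theorem lemma1 (R : realType) (X : completeNormedModType R) (p : R) :
  2%:R <= p -> unif_convex_type X p ->
  exists K : R, 0 < K /\
    forall (D : R) (phi : Yv -> X), 0 < D ->
      (forall x y : Yv, `|phi x - phi y| <= D * tdist R x y) ->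
      (forall x y : Yv, tdist R x y <= `|phi x - phi y|) ->
      `|phi a0 - phi a2| <= 2%:R * (D - K / D `^ (p - 1)) \/
      `|phi a0 - phi a2'| <= 2%:R * (D - K / D `^ (p - 1)).
Proof.
move=> p2 [c [c0 convex]].
have p1 : 1 <= p by apply: le_trans p2; rewrite ler1n.
have Q0 : 0 < 2%:R * 2%:R `^ p by rewrite mulr_gt0 ?powR_gt0.
exists (Num.min 4%:R^-1 (c / (2%:R * 2%:R `^ p))); split.
  by rewrite lt_min invr_gt0 ltr0n divr_gt0.
move=> D phi _ Lip Dist.
have edge (x y : Yv) : tdist R x y = 1 -> 1 <= `|phi x - phi y| <= D.
  by move=> xy1; rewrite -xy1 Dist -[D]mulr1 -xy1 Lip.
have through_a1 (z : Yv) :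
    `|phi a0 - phi z| = `|(phi a1 - phi a0) + (phi z - phi a1)|.
  by rewrite [in RHS]addrC subrKA distrC.
rewrite !through_a1; apply: (tripod_short_branch p1 (ltW c0) convex).
- by rewrite le_min invr_ge0 ler0n divr_ge0 // ltW.
- by rewrite ge_min lexx.
- by rewrite -ler_pdivlMr // ge_min lexx orbT.
- exact: edge.
- exact: edge.
- exact: edge.
- by rewrite opprB subrKA; apply: Dist a2 a2'.
Qed.
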